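(* Let $(A,\cdot,\omega)$ be a symmetric twisted partial $H$-module algebra and let $u,v\in\mathrm{Hom}(H,A)$ be weakly convolution-invertible linear maps, such that $v*u$ is weakly convolution-invertible with $(v*u)^{-1}=u^{-1}*v^{-1}$. Then $\omega^{v*u}=(\omega^{u})^{v}$ and $\cdot^{v*u}=(\cdot^{u})^{v}$, i.e. $h\cdot^{v*u}a=h(\cdot^u)^v a$ for all $h\in H$, $a\in A$, where $(\omega^u)^v$ and $(\cdot^u)^v$ denote the transforms by $v$ of the pair $(\omega^u,\cdot^u)$.
   Context: $k$ a field, $H$ a Hopf algebra over $k$ with Sweedler notation $\Delta(h)=h_{(1)}\otimes h_{(2)}$, counit $\varepsilon$, antipode $S$; $A$ a unital $k$-algebra. A twisted partial action of $H$ on $A$ is a pair of linear maps $h\otimes a\mapsto h\cdot a$ and $\omega:H\otimes H\to A$ with $1_H\cdot a=a$, $h\cdot(ab)=(h_{(1)}\cdot a)(h_{(2)}\cdot b)$, $(h_{(1)}\cdot(l_{(1)}\cdot a))\omega(h_{(2)},l_{(2)})=\omega(h_{(1)},l_{(1)})(h_{(2)}l_{(2)}\cdot a)$, $\omega(h,l)=\omega(h_{(1)},l_{(1)})(h_{(2)}l_{(2)}\cdot 1_A)$. Convolution on $\mathrm{Hom}(H,A)$: $(f*g)(h)=f(h_{(1)})g(h_{(2)})$, and similarly on $\mathrm{Hom}(H\otimes H,A)$. Let $e(h)=h\cdot1_A$, $f_1(h,k)=(h\cdot 1_A)\varepsilon(k)$, $f_2(h,k)=hk\cdot 1_A$. The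 twisted partial action is symmetric if: $e$ is central in $\mathrm{Hom}(H,A)$; $f_1,f_2$ are central in $\mathrm{Hom}(H\otimes H,A)$; $\omega$ satisfies (N) $\omega(1_H,h)=\omega(h,1_H)=h\cdot 1_A$ and (T3) above, and has a convolution inverse $\omega'$ in the ideal generated by $f_1*f_2$ (i.e. $\omega*\omega'=\omega'*\omega=f_1*f_2$); and $h\cdot(k\cdot 1_A)=(h_{(1)}\cdot 1_A)(h_{(2)}k\cdot 1_A)$ for all $h,k$. A linear map $v\in\mathrm{Hom}(H,A)$ is weakly convolution-invertible if there is $u\in\mathrm{Hom}(H,A)$ with $u*v=v*u=e$, $u(h)=u(h_{(1)})(h_{(2)}\cdot1_A)=(h_{(1)}\cdot1_A)u(h_{(2)})$ and $u(1_H)=v(1_H)=1_A$; write $v^{-1}=u$. For such $v$ define $\omega^v(h,g)=v(h_{(1)})(h_{(2)}\cdot v(g_{(1)}))\omega(h_{(3)},g_{(2)})v^{-1}(h_{(4)}g_{(3)})$ and $h\cdot^v a=v(h_{(1)})(h_{(2)}\cdot a)v^{-1}(h_{(3)})$. *)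

From HB Require Import structures.
From mathcomp Require Import all_boot all_order all_algebra.
Set Implicit Arguments. Unset Strict Implicit. Unset Printing Implicit Defensive.
Import Order.TTheory GRing.Theory Num.Theory.
Local Open Scope ring_scope.

Definition lin (k : fieldType) (U V : lmodType k) (f : U -> V) : Prop :=
  forall (a : k) (x y : U), f (a *: x + y) = a *: f x + f y.

Definition bilin (k : fieldType) (U1 U2 V : lmodType k) (f : U1 -> U2 -> V) : Prop :=
  (forall x, lin (f x)) /\ (forall y, lin (fun x => f x y)).

Definition trilin (k : fieldType) (U1 U2 U3 V : lmodType k)
    (f : U1 -> U2 -> U3 -> V) : Prop :=
  (forall x y, lin (f x y)) /\ (forall x z, lin (fun y => f x y z))
  /\ (forall y z, lin (fun x => f x y z)).

(* The comultiplication is represented by a finite Sweedler expansion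
   delta h = [:: (h_(1), h_(2)); ...], i.e. Delta(h) = \sum_(p <- delta h) p.1 (x) p.2.
   All properties of Delta are stated through the universal property of the
   tensor product: they are required after contraction with every
   (bi/tri)linear map into every k-vector space V. *)
Definition sw (k : fieldType) (H : algType k) (V : lmodType k)
    (delta : H -> seq (H * H)) (h : H) (f : H -> H -> V) : V :=
  \sum_(p <- delta h) f p.1 p.2.

Definition is_hopf (k : fieldType) (H : algType k)
    (delta : H -> seq (H * H)) (eps : H -> k) (S : H -> H) : Prop :=
  (* Delta is a well-defined linear map H -> H (x) H *)
  (forall (V : lmodType k) (f : H -> H -> V), bilin f ->
      lin (fun h => sw delta h f))
  /\ (forall (V : lmodType k) (f : H -> H -> H -> V), trilin f -> forall h,
      \sum_(p <- delta h) \sum_(q <- delta p.1) f q.1 q.2 p.2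
      = \sum_(p <- delta h) \sum_(q <- delta p.2) f p.1 q.1 q.2)
  /\ (forall (a : k) (x y : H), eps (a *: x + y) = a * eps x + eps y)
  /\ (forall h, \sum_(p <- delta h) eps p.1 *: p.2 = h)
  /\ (forall h, \sum_(p <- delta h) eps p.2 *: p.1 = h)
  /\ (forall (V : lmodType k) (f : H -> H -> V), bilin f -> forall x y,
      sw delta (x * y) f
      = \sum_(p <- delta x) \sum_(q <- delta y) f (p.1 * q.1) (p.2 * q.2))
  /\ (forall (V : lmodType k) (f : H -> H -> V), bilin f -> sw delta 1 f = f 1 1)
  /\ (forall x y, eps (x * y) = eps x * eps y)
  /\ eps 1 = 1
  /\ lin S
  /\ (forall h, \sum_(p <- delta h) S p.1 * p.2 = eps h *: 1)
  /\ (forall h, \sum_(p <- delta h) p.1 * S p.2 = eps h *: 1).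

Section TPA.
Variables (k : fieldType) (H : algType k) (A : algType k).
Variable (delta : H -> seq (H * H)).

Definition conv1 (f g : H -> A) (h : H) : A := sw delta h (fun x y => f x * g y).

(* convolution on Hom(H (x) H, A), bilinear maps representing H (x) H -> A *)
Definition conv2 (F G : H -> H -> A) (h l : H) : A :=
  \sum_(p <- delta h) \sum_(q <- delta l) F p.1 q.1 * G p.2 q.2.

Variables (eps : H -> k) (act : H -> A -> A) (omega : H -> H -> A).

Definition e_map (h : H) : A := act h 1.
Definition f1_map (h l : H) : A := eps l *: act h 1.
Definition f2_map (h l : H) : A := act (h * l) 1.

Definition twisted_partial_action : Prop :=
  bilin act /\ bilin omega
  /\ (forall a, act 1 a = a)
  /\ (forall h a b, act h (a * b) = sw delta h (fun x y => act x a * act y b))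
  /\ (forall h l a,
        \sum_(p <- delta h) \sum_(q <- delta l) act p.1 (act q.1 a) * omega p.2 q.2
      = \sum_(p <- delta h) \sum_(q <- delta l) omega p.1 q.1 * act (p.2 * q.2) a)
  /\ (forall h l,
        omega h l = \sum_(p <- delta h) \sum_(q <- delta l)
                      omega p.1 q.1 * act (p.2 * q.2) 1).

Definition symmetric_tpa : Prop :=
  twisted_partial_action
  /\ (forall f : H -> A, lin f -> forall h, conv1 e_map f h = conv1 f e_map h)
  /\ (forall F : H -> H -> A, bilin F ->
        forall h l, conv2 f1_map F h l = conv2 F f1_map h l)
  /\ (forall F : H -> H -> A, bilin F ->
        forall h l, conv2 f2_map F h l = conv2 F f2_map h l)
  /\ (forall h, omega 1 h = act h 1 /\ omega h 1 = act h 1)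
  /\ (exists omega' : H -> H -> A, bilin omega'
        /\ (forall h l, conv2 omega omega' h l = conv2 f1_map f2_map h l)
        /\ (forall h l, conv2 omega' omega h l = conv2 f1_map f2_map h l))
  /\ (forall h l, act h (act l 1) = sw delta h (fun x y => act x 1 * act (y * l) 1)).

(* u is a weak convolution inverse of the linear map v (so v^{-1} = u) *)
Definition weak_inv (v u : H -> A) : Prop :=
  lin v /\ lin u
  /\ (forall h, conv1 u v h = e_map h) /\ (forall h, conv1 v u h = e_map h)
  /\ (forall h, u h = sw delta h (fun x y => u x * act y 1))
  /\ (forall h, u h = sw delta h (fun x y => act x 1 * u y))
  /\ u 1 = 1 /\ v 1 = 1.

(* omega^v (h, g) = v(h1) (h2 . v(g1)) omega(h3, g2) v^{-1}(h4 g3) *)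
Definition omega_tr (v vinv : H -> A) (h g : H) : A :=
  \sum_(p <- delta h) \sum_(q <- delta p.2) \sum_(r <- delta q.2)
  \sum_(s <- delta g) \sum_(t <- delta s.2)
    v p.1 * act q.1 (v s.1) * omega r.1 t.1 * vinv (r.2 * t.2).

(* h .^v a = v(h1) (h2 . a) v^{-1}(h3) *)
Definition act_tr (v vinv : H -> A) (h : H) (a : A) : A :=
  \sum_(p <- delta h) \sum_(q <- delta p.2) v p.1 * act q.1 a * vinv q.2.

End TPA.

From HB Require Import structures.
From mathcomp Require Import all_boot all_order all_algebra.
From Stdlib Require Import FunctionalExtensionality.
Import Order.TTheory GRing.Theory Num.Theory.
Set Implicit Arguments. Unset Strict Implicit. Unset Printing Implicit Defensive.
Local Open Scope ring_scope.

(* Both transforms are convolution products in Hom(H (x) H, A):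
     omega^v = (v (x) eps) * (h (x) g |-> h . v(g)) * omega * (v^{-1} o m),
     h .^v a = (v * (h |-> h . a) * v^{-1})(h).
   Convolution is associative, and each factor is multiplicative in v:
   (v*u) (x) eps = (v (x) eps) * (u (x) eps) because eps is a counit,
   h . (v*u)(g) splits since the action is measuring, and (u^{-1}*v^{-1}) o m
   splits since Delta is multiplicative.  Transforming the action by u turns
   the second factor into (u (x) eps) * (h (x) g |-> h . v(g)) * (u^{-1} (x) eps),
   and the inner pair u^{-1} (x) eps, u (x) eps cancels against it because
   u^{-1} * u = e and h . v(g) = (h_(1) . v(g)) (h_(2) . 1). *)

Section Linear.
Variable k : fieldType.

Lemma lin0 (U V : lmodType k) (f : U -> V) : lin f -> f 0 = 0.
Proof.
move=> hf; have E := hf 1 0 0; rewrite !scale1r addr0 in E.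
by apply: (@addrI _ (f 0)); rewrite addr0 -E.
Qed.

Lemma linD (U V : lmodType k) (f : U -> V) : lin f -> forall x y, f (x + y) = f x + f y.
Proof. by move=> hf x y; have := hf 1 x y; rewrite !scale1r. Qed.

Lemma linZ (U V : lmodType k) (f : U -> V) : lin f -> forall a x, f (a *: x) = a *: f x.
Proof. by move=> hf a x; have := hf a x 0; rewrite !addr0 (lin0 hf) addr0. Qed.

Lemma lin_sum (U V : lmodType k) (f : U -> V) (I : Type) (s : seq I) (F : I -> U) :
  lin f -> f (\sum_(i <- s) F i) = \sum_(i <- s) f (F i).
Proof.
move=> hf; elim: s => [|x s IH]; first by rewrite !big_nil (lin0 hf).
by rewrite !big_cons (linD hf) IH.
Qed.

Lemma lin_sumr (U V : lmodType k) (I : Type) (s : seq I) (G : I -> U -> V) :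
  (forall i, lin (G i)) -> lin (fun x => \sum_(i <- s) G i x).
Proof.
move=> hG a x y /=; rewrite scaler_sumr -big_split /=.
by apply: eq_bigr => i _; rewrite hG.
Qed.

Lemma lin_comp (U V W : lmodType k) (f : V -> W) (g : U -> V) :
  lin f -> lin g -> lin (fun x => f (g x)).
Proof. by move=> hf hg a x y; rewrite hg hf. Qed.

Lemma lin_mull (U : lmodType k) (A : algType k) (f : U -> A) (c : A) :
  lin f -> lin (fun x => f x * c).
Proof. by move=> hf a x y; rewrite hf mulrDl scalerAl. Qed.

Lemma lin_mulr (U : lmodType k) (A : algType k) (f : U -> A) (c : A) :
  lin f -> lin (fun x => c * f x).
Proof. by move=> hf a x y; rewrite hf mulrDr scalerAr. Qed.

End Linear.

Section Bialgebra.
Variables (k : fieldType) (H : algType k) (delta : H -> seq (H * H)) (eps : H -> k).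

Hypothesis delta_lin : forall (V : lmodType k) (f : H -> H -> V),
  bilin f -> lin (fun h => sw delta h f).
Hypothesis coassoc : forall (V : lmodType k) (f : H -> H -> H -> V), trilin f ->
  forall h, \sum_(p <- delta h) \sum_(q <- delta p.1) f q.1 q.2 p.2
          = \sum_(p <- delta h) \sum_(q <- delta p.2) f p.1 q.1 q.2.
Hypothesis eps_lin : forall (a : k) (x y : H), eps (a *: x + y) = a * eps x + eps y.
Hypothesis counitL : forall h, \sum_(p <- delta h) eps p.1 *: p.2 = h.
Hypothesis counitR : forall h, \sum_(p <- delta h) eps p.2 *: p.1 = h.
Hypothesis delta_mul : forall (V : lmodType k) (f : H -> H -> V), bilin f ->
  forall x y, sw delta (x * y) f
            = \sum_(p <- delta x) \sum_(q <- delta y) f (p.1 * q.1) (p.2 * q.2).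

Variable A : algType k.

Local Notation "f * g" := (conv1 delta f g) : function_scope.
Local Notation "F ** G" := (conv2 delta F G) (at level 40, left associativity).

Lemma counitL_lin (V : lmodType k) (f : H -> V) h : lin f ->
  \sum_(p <- delta h) eps p.1 *: f p.2 = f h.
Proof.
move=> hf; rewrite -{2}(counitL h) (lin_sum _ _ hf).
by apply: eq_bigr => p _; rewrite (linZ hf).
Qed.

Lemma counitR_lin (V : lmodType k) (f : H -> V) h : lin f ->
  \sum_(p <- delta h) eps p.2 *: f p.1 = f h.
Proof.
move=> hf; rewrite -{2}(counitR h) (lin_sum _ _ hf).
by apply: eq_bigr => p _; rewrite (linZ hf).
Qed.

Lemma bilin_mul (f g : H -> A) : lin f -> lin g -> bilin (fun x y => f x * g y).
Proof. by move=> hf hg; split=> [x|y]; [apply: lin_mulr | apply: lin_mull]. Qed.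

Lemma conv1_lin (f g : H -> A) : lin f -> lin g -> lin (f * g)%function.
Proof. by move=> hf hg; apply: delta_lin; apply: bilin_mul. Qed.

Lemma conv1A (f g l : H -> A) : lin f -> lin g -> lin l ->
  ((f * g) * l = f * (g * l))%function.
Proof.
move=> hf hg hl; apply: functional_extensionality => h; rewrite /conv1 /sw.
rewrite (eq_bigr (fun p => \sum_(q <- delta p.1) f q.1 * g q.2 * l p.2)); last first.
  by move=> p _; rewrite mulr_suml.
rewrite (coassoc (f := fun x y z => f x * g y * l z)); last first.
  split; [|split].
  - by move=> x y; apply: lin_mulr.
  - by move=> x z; apply: (lin_mull _ (lin_mulr _ hg)).
  - by move=> y z; apply: (lin_mull _ (lin_mull _ hf)).
by apply: eq_bigr => p _; rewrite mulr_sumr; apply: eq_bigr => q _; rewrite mulrA.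
Qed.

Lemma bilin_conv2 (F G : H -> H -> A) : bilin F -> bilin G -> bilin (F ** G).
Proof.
move=> [F1 F2] [G1 G2]; split=> [h|l]; rewrite /conv2.
- apply: lin_sumr => p.
  by apply: (delta_lin (f := fun a b => F p.1 a * G p.2 b)); split=> ?;
    [apply: lin_mulr | apply: lin_mull].
- apply: (delta_lin (f := fun x y => \sum_(q <- delta l) F x q.1 * G y q.2)).
  by split=> ?; apply: lin_sumr => q; [apply: lin_mulr | apply: lin_mull].
Qed.

Lemma conv2A (F G K : H -> H -> A) : bilin F -> bilin G -> bilin K ->
  (F ** G) ** K = F ** (G ** K).
Proof.
move=> [F1 F2] [G1 G2] [K1 K2].
apply: functional_extensionality => h; apply: functional_extensionality => g.
rewrite /conv2.
pose T x y z := \sum_(q <- delta g) \sum_(q' <- delta q.1) F x q'.1 * G y q'.2 * K z q.2.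
have -> : \sum_(p <- delta h) \sum_(q <- delta g)
     (\sum_(p0 <- delta p.1) \sum_(q0 <- delta q.1) F p0.1 q0.1 * G p0.2 q0.2) * K p.2 q.2
   = \sum_(p <- delta h) \sum_(p' <- delta p.1) T p'.1 p'.2 p.2.
  apply: eq_bigr => p _; rewrite /T exchange_big /=; apply: eq_bigr => q _.
  by rewrite mulr_suml; apply: eq_bigr => p' _; rewrite mulr_suml.
rewrite coassoc; last first.
  split; [|split].
  - by move=> x y; apply: lin_sumr => q; apply: lin_sumr => q'; apply: lin_mulr.
  - move=> x z; apply: lin_sumr => q; apply: lin_sumr => q'.
    exact: (lin_mull _ (lin_mulr _ (G2 _))).
  - move=> y z; apply: lin_sumr => q; apply: lin_sumr => q'.
    exact: (lin_mull _ (lin_mull _ (F2 _))).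
apply: eq_bigr => p _; rewrite /T /=.
rewrite [RHS](eq_bigr (fun q => \sum_(p' <- delta p.2) \sum_(q' <- delta q.2)
          F p.1 q.1 * G p'.1 q'.1 * K p'.2 q'.2)); last first.
  move=> q _; rewrite mulr_sumr; apply: eq_bigr => p' _; rewrite mulr_sumr.
  by apply: eq_bigr => q' _; rewrite mulrA.
rewrite [RHS]exchange_big /=; apply: eq_bigr => p' _.
apply: (coassoc (f := fun a b c => F p.1 a * G p'.1 b * K p'.2 c)).
split; [|split].
- by move=> a b; apply: lin_mulr.
- by move=> a c; apply: (lin_mull _ (lin_mulr _ (G1 _))).
- by move=> b c; apply: (lin_mull _ (lin_mull _ (F1 _))).
Qed.

Definition tensor_eps (f : H -> A) (x y : H) : A := eps y *: f x.
Definition act_comp (act : H -> A -> A) (f : H -> A) (x y : H) : A := act x (f y).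
Definition comp_mul (f : H -> A) (x y : H) : A := f (x * y).

Lemma bilin_tensor_eps (f : H -> A) : lin f -> bilin (tensor_eps f).
Proof.
move=> hf; split=> [x a y z | y a x z]; rewrite /tensor_eps.
- by rewrite eps_lin scalerDl scalerA.
- by rewrite hf scalerDr !scalerA mulrC.
Qed.

Lemma bilin_act_comp (act : H -> A -> A) (f : H -> A) :
  bilin act -> lin f -> bilin (act_comp act f).
Proof. by move=> [act1 act2] hf; split=> [x|y]; [apply: lin_comp | apply: act2]. Qed.

Lemma bilin_comp_mul (f : H -> A) : lin f -> bilin (comp_mul f).
Proof.
move=> hf; split=> [x a y z | y a x z]; rewrite /comp_mul -hf; congr f.
- by rewrite mulrDr scalerAr.
- by rewrite mulrDl scalerAl.
Qed.

Lemma conv2_tensor_epsl (f : H -> A) (F : H -> H -> A) h g : (forall x, lin (F x)) ->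
  (tensor_eps f ** F) h g = \sum_(p <- delta h) f p.1 * F p.2 g.
Proof.
move=> hF; rewrite /conv2; apply: eq_bigr => p _.
rewrite -(counitL_lin g (hF p.2)) mulr_sumr; apply: eq_bigr => q _.
by rewrite /tensor_eps -scalerAl scalerAr.
Qed.

Lemma conv2_tensor_epsr (f : H -> A) (F : H -> H -> A) h g : (forall x, lin (F x)) ->
  (F ** tensor_eps f) h g = \sum_(p <- delta h) F p.1 g * f p.2.
Proof.
move=> hF; rewrite /conv2; apply: eq_bigr => p _.
rewrite -(counitR_lin g (hF p.1)) mulr_suml; apply: eq_bigr => q _.
by rewrite /tensor_eps -scalerAr scalerAl.
Qed.

Lemma tensor_eps_conv1 (f g : H -> A) : lin g ->
  tensor_eps (f * g)%function = tensor_eps f ** tensor_eps g.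
Proof.
move=> hg; apply: functional_extensionality => h; apply: functional_extensionality => l.
rewrite conv2_tensor_epsl; last by case: (bilin_tensor_eps hg).
by rewrite /tensor_eps /conv1 /sw scaler_sumr; apply: eq_bigr => p _; rewrite scalerAr.
Qed.

Lemma comp_mul_conv1 (f g : H -> A) : lin f -> lin g ->
  comp_mul (f * g)%function = comp_mul f ** comp_mul g.
Proof.
move=> hf hg; apply: functional_extensionality => x; apply: functional_extensionality => y.
by rewrite /comp_mul /conv1 delta_mul //; apply: bilin_mul.
Qed.

Lemma omega_trE (act : H -> A -> A) (omega : H -> H -> A) (v vinv : H -> A) :
  bilin act -> bilin omega -> lin v -> lin vinv ->
  omega_tr delta act omega v vinv
  = tensor_eps v ** (act_comp act v ** (omega ** comp_mul vinv)).
Proof.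
move=> hact homega hv hvinv.
apply: functional_extensionality => h; apply: functional_extensionality => g.
have [hF _] : bilin (act_comp act v ** (omega ** comp_mul vinv)).
  by apply: bilin_conv2; [apply: bilin_act_comp | apply: bilin_conv2 => //; apply: bilin_comp_mul].
rewrite conv2_tensor_epsl // /omega_tr /conv2 /act_comp /comp_mul.
apply: eq_bigr => p _; rewrite mulr_sumr; apply: eq_bigr => q _.
rewrite exchange_big /= mulr_sumr; apply: eq_bigr => s _; rewrite !mulr_sumr.
by apply: eq_bigr => r _; rewrite !mulr_sumr; apply: eq_bigr => t _; rewrite !mulrA.
Qed.

Lemma act_trE (act : H -> A -> A) (v vinv : H -> A) h a :
  act_tr delta act v vinv h a = (v * ((act^~ a) * vinv))%function h.
Proof.
rewrite /act_tr /conv1 /sw; apply: eq_bigr => p _; rewrite mulr_sumr.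
by apply: eq_bigr => q _; rewrite mulrA.
Qed.

Lemma bilin_act_tr (act : H -> A -> A) (v vinv : H -> A) :
  bilin act -> lin v -> lin vinv -> bilin (act_tr delta act v vinv).
Proof.
move=> [act1 act2] hv hvinv; split=> [h|a].
- rewrite /act_tr; apply: lin_sumr => p; apply: lin_sumr => q.
  exact: (lin_mull _ (lin_mulr _ (act1 _))).
- rewrite (functional_extensionality _ _ (fun h => act_trE act v vinv h a)).
  by apply: conv1_lin => //; apply: conv1_lin.
Qed.

Section Transform.
Variables (act : H -> A -> A) (omega : H -> H -> A).
Hypothesis act_bilin : bilin act.
Hypothesis omega_bilin : bilin omega.
Hypothesis act_mul : forall h a b, act h (a * b) = sw delta h (fun x y => act x a * act y b).

Local Hint Resolve bilin_conv2 bilin_tensor_eps bilin_act_comp bilin_comp_mul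
  bilin_act_tr conv1_lin : core.

Lemma act_comp_conv1 (f g : H -> A) :
  act_comp act (f * g)%function = act_comp act f ** act_comp act g.
Proof.
have [act1 _] := act_bilin.
apply: functional_extensionality => x; apply: functional_extensionality => y.
rewrite /act_comp /conv1 /sw /conv2 (lin_sum _ _ (act1 x)) exchange_big /=.
by apply: eq_bigr => s _; rewrite act_mul.
Qed.

Lemma act_comp_act_tr (u uinv f : H -> A) : lin u -> lin uinv -> lin f ->
  act_comp (act_tr delta act u uinv) f
  = tensor_eps u ** (act_comp act f ** tensor_eps uinv).
Proof.
move=> hu huinv hf.
apply: functional_extensionality => x; apply: functional_extensionality => y.
have [hF _] : bilin (act_comp act f) by auto.
have [hFe _] : bilin (act_comp act f ** tensor_eps uinv) by auto.
rewrite conv2_tensor_epsl // /act_comp /act_tr; apply: eq_bigr => p _.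
by rewrite conv2_tensor_epsr // mulr_sumr; apply: eq_bigr => q _; rewrite mulrA.
Qed.

Lemma act_comp_conv2_e (f : H -> A) : lin f ->
  act_comp act f ** tensor_eps (e_map act) = act_comp act f.
Proof.
move=> hf; apply: functional_extensionality => x; apply: functional_extensionality => y.
have [hF _] : bilin (act_comp act f) by auto.
by rewrite conv2_tensor_epsr // /act_comp /e_map -[in RHS](mulr1 (f y)) act_mul.
Qed.

Lemma act_comp_conv2_cancel (f u uinv : H -> A) (F : H -> H -> A) :
  lin f -> lin u -> lin uinv -> bilin F -> (forall h, (uinv * u)%function h = e_map act h) ->
  act_comp act f ** (tensor_eps uinv ** (tensor_eps u ** F)) = act_comp act f ** F.
Proof.
move=> hf hu huinv hF uinvu.
have he : lin (e_map act) by move=> a x y; rewrite /e_map (proj2 act_bilin).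
rewrite -[tensor_eps uinv ** _]conv2A; auto.
rewrite -tensor_eps_conv1 // (functional_extensionality _ _ uinvu).
by rewrite -conv2A ?act_comp_conv2_e; auto.
Qed.

Lemma omega_tr_conv1 (u uinv v vinv : H -> A) :
  lin u -> lin uinv -> lin v -> lin vinv ->
  (forall h, (uinv * u)%function h = e_map act h) ->
  omega_tr delta act omega (v * u) (uinv * vinv)
  = omega_tr delta (act_tr delta act u uinv) (omega_tr delta act omega u uinv) v vinv.
Proof.
move=> hu huinv hv hvinv uinvu.
have homega_u : bilin (omega_tr delta act omega u uinv) by rewrite omega_trE; auto.
rewrite !omega_trE; auto.
rewrite act_comp_act_tr // tensor_eps_conv1 // act_comp_conv1 comp_mul_conv1 //.
by rewrite !conv2A ?act_comp_conv2_cancel; auto 7.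
Qed.

Lemma act_tr_conv1 (u uinv v vinv : H -> A) h a :
  lin u -> lin uinv -> lin v -> lin vinv ->
  act_tr delta act (v * u) (uinv * vinv) h a
  = act_tr delta (act_tr delta act u uinv) v vinv h a.
Proof.
move=> hu huinv hv hvinv; have [_ act2] := act_bilin.
rewrite !act_trE (functional_extensionality _ _ (fun h => act_trE act u uinv h a)).
by rewrite !conv1A; auto.
Qed.

End Transform.
End Bialgebra.

Theorem lemma5p3 (k : fieldType) (H : algType k)
    (delta : H -> seq (H * H)) (eps : H -> k) (S : H -> H)
    (hH : is_hopf delta eps S)
    (A : algType k) (act : H -> A -> A) (omega : H -> H -> A)
    (hsym : symmetric_tpa delta eps act omega)
    (u uinv v vinv : H -> A)
    (hu : weak_inv delta act u uinv)
    (hv : weak_inv delta act v vinv)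
    (hvu : weak_inv delta act (conv1 delta v u) (conv1 delta uinv vinv)) :
  (forall h g : H,
     omega_tr delta act omega (conv1 delta v u) (conv1 delta uinv vinv) h g
     = omega_tr delta (act_tr delta act u uinv) (omega_tr delta act omega u uinv)
                v vinv h g)
  /\ (forall (h : H) (a : A),
     act_tr delta act (conv1 delta v u) (conv1 delta uinv vinv) h a
     = act_tr delta (act_tr delta act u uinv) v vinv h a).
Proof.
have [delta_lin [coassoc [eps_lin [counitL [counitR [delta_mul _]]]]]] := hH.
have [[act_bilin [omega_bilin [_ [act_mul _]]]] _] := hsym.
have [hu_lin [huinv_lin [uinvu _]]] := hu.
have [hv_lin [hvinv_lin _]] := hv.
split=> [h g | h a]; last exact: act_tr_conv1.
by rewrite (omega_tr_conv1 delta_lin coassoc eps_lin counitL counitR delta_mul).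
Qed.
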